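(* Let $T$ be a finite $2$-group and $H$ a finite group of odd order such that $d(T\times H)=2$ and the Frattini subgroup $\Phi(T)$ is nontrivial. Then $\mathsf{GEN}(T\times H)=*0$.
   Context: For a finite group $G$, $\mathsf{GEN}(G)$ is the following impartial two-player game. A position is a set of elements selected so far; the starting position is $\emptyset$. From a position $P$ with $\langle P\rangle\neq G$, the player to move selects some $g\in G\setminus P$, producing the position $P\cup\{g\}$ (these are the options of $P$); a position $P$ with $\langle P\rangle = G$ has no options. The nim-number of a position is defined recursively by $\operatorname{nim}(P)=\operatorname{mex}\{\operatorname{nim}(Q): Q \text{ an option of } P\}$, where $\operatorname{mex}(A)$ is the least nonnegative integer not in $A$. We write $\mathsf{GEN}(G)=*n$ if $\operatorname{nim}(\emptyset)=n$. $d(G)$ denotes the minimum size of a generating set of $G$. *)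

From HB Require Import structures.
From mathcomp Require Import all_boot all_order all_fingroup all_solvable.
Set Implicit Arguments. Unset Strict Implicit. Unset Printing Implicit Defensive.
Local Open Scope group_scope.

(* mex of a finite list of naturals: the least n not in s
   (always found among 0 .. size s). *)
Definition mex (s : seq nat) : nat :=
  find (fun n => n \notin s) (iota 0 (size s).+1).

Fixpoint gen_nim_fuel (gT : finGroupType) (k : nat) (G P : {set gT}) : nat :=
  if k is k'.+1 then
    if <<P>> == G then 0
    else mex [seq gen_nim_fuel k' G (P :|: [set g]) | g <- enum (G :\: P)]
  else 0.

(* Fuel #|G :\: P|.+1 is sufficient: each move decreases #|G :\: P| by one, and
   the position P = G (reached when #|G :\: P| = 0 for P \subset G) is terminal. *)
Definition gen_nim (gT : finGroupType) (G P : {set gT}) : nat :=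
  gen_nim_fuel #|G :\: P|.+1 G P.

Definition GEN (gT : finGroupType) (G : {set gT}) : nat := gen_nim G set0.

Definition gen_set_of_size (gT : finGroupType) (G : {set gT}) (n : nat) : bool :=
  [exists A : {set gT}, [&& A \subset G, #|A| == n & <<A>> == G]].

Lemma gen_set_of_size_ex (gT : finGroupType) (G : {group gT}) :
  exists n, gen_set_of_size G n.
Proof.
exists #|G|; apply/existsP; exists (G : {set gT}).
by rewrite subxx eqxx genGid eqxx.
Qed.

Definition dgen (gT : finGroupType) (G : {group gT}) : nat :=
  ex_minn (gen_set_of_size_ex G).

From HB Require Import structures.
From mathcomp Require Import all_boot all_order all_fingroup all_solvable.
Set Implicit Arguments. Unset Strict Implicit. Unset Printing Implicit Defensive.
Local Open Scope group_scope.

(* Pairing strategy.  Let z be an involution in the Frattini subgroup of a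
   noncyclic group G.  The second player answers a move x with x * z, unless
   some element already completes a generating set, in which case he plays it.
   After each of his moves the position is closed under right multiplication
   by z and no single element completes it: since z is a non-generator,
   completing P, x, x * z, y would already complete P, x, y.  So the second
   player never loses.  For G = T x H take z = (f, 1) with f an involution of
   Phi(T); it lies in Phi(T x H) because T and H have coprime orders, so a
   subgroup of T x H projecting onto both factors is all of T x H. *)

Lemma mex_eq0 s : (mex s == 0) = (0 \notin s).
Proof. by rewrite /mex /=; case: (0 \in s). Qed.

Lemma gen_setU1_id (gT : finGroupType) (A : {set gT}) x :
  x \in <<A>> -> <<A :|: [set x]>> = <<A>>.
Proof.
move=> Ax; apply/eqP.
by rewrite eqEsubset gen_subG subUset subset_gen sub1set Ax genS ?subsetUl.
Qed.

Section FrattiniNongenerators.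

Variables (gT : finGroupType) (G : {group gT}).

Lemma Phi_gen_setU1 (A : {set gT}) z :
  z \in 'Phi(G) -> A \subset G -> <<A :|: [set z]>> = G -> <<A>> = G.
Proof.
move=> zPhi sAG genAz; apply: Phi_nongen; apply/eqP.
rewrite eqEsubset join_subG Phi_sub sAG -{1}genAz /= joingE genS //.
by rewrite subUset subsetUr sub1set inE zPhi.
Qed.

Lemma mem_Phi_nongen z :
    z \in G ->
    (forall A : {set gT}, A \subset G -> <<A :|: [set z]>> = G -> <<A>> = G) ->
  z \in 'Phi(G).
Proof.
move=> zG nongen_z; apply/bigcapP => M /maximal_eqP[sMG maxM].
apply/idPn => zM.
have sMMz : M \subset <<M :|: [set z]>>%G by rewrite sub_gen ?subsetUl.
have sMzG : <<M :|: [set z]>>%G \subset G by rewrite gen_subG subUset sMG sub1set.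
have genMz : <<M :|: [set z]>> = G.
  have [defMz|//] := maxM _ sMMz sMzG.
  by move: zM; rewrite -defMz mem_gen // !inE eqxx orbT.
by move: zM; rewrite -[M : {set gT}]genGid (nongen_z _ sMG genMz) zG.
Qed.

Lemma gen_setU1_mulPhi (B : {set gT}) x z :
    z \in 'Phi(G) -> B \subset G -> x \in B ->
  <<B :|: [set x * z]>> = G -> <<B>> = G.
Proof.
move=> zPhi sBG xB genBxz; apply: (Phi_gen_setU1 zPhi sBG).
have zG : z \in G := subsetP (Phi_sub G) z zPhi.
apply/eqP; rewrite eqEsubset gen_subG subUset sBG sub1set zG /=.
rewrite -{1}genBxz gen_subG subUset sub1set sub_gen ?subsetUl //=.
by rewrite groupM ?mem_gen // !inE ?xB ?eqxx ?orbT.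
Qed.

End FrattiniNongenerators.

Section CoprimeDirectProduct.

Variables (gT1 gT2 : finGroupType).

Lemma pair_expg (x : gT1 * gT2) n : x ^+ n = (x.1 ^+ n, x.2 ^+ n).
Proof. by case: x => a b; elim: n => [|n IHn] //=; rewrite !expgS IHn. Qed.

(* x.1 is a power of x.1 ^+ #[x.2], and x ^+ #[x.2] = (x.1 ^+ #[x.2], 1). *)
Lemma pairg1_in_cycle (x : gT1 * gT2) :
  coprime #[x.1] #[x.2] -> (x.1, 1) \in <[x]>.
Proof.
move=> co_x; have /eqP gen_x1 := generator_coprime x.1 #[x.2].
rewrite co_x in gen_x1.
have /cycleP[e ->] : x.1 \in <[x.1 ^+ #[x.2]]> by rewrite -gen_x1 cycle_id.
have -> : (x.1 ^+ #[x.2] ^+ e, 1) = x ^+ #[x.2] ^+ e.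
  by rewrite !pair_expg /= expg_order expg1n.
by rewrite !groupX ?cycle_id.
Qed.

Variables (T : {group gT1}) (H : {group gT2}).
Hypothesis coTH : coprime #|T| #|H|.

Lemma coprime_subdirect_setX (K : {group gT1 * gT2}) :
    K \subset setX T H ->
    [morphism of fun x => x.1] @* K = T -> [morphism of fun x => x.2] @* K = H ->
  K :=: setX T H.
Proof.
move=> sKTH fstK sndK; apply/eqP; rewrite eqEsubset sKTH /=.
have pairg1_K k : k \in K -> (k.1, 1) \in K.
  case: k => k1 k2 Kk; have /setXP[Tk1 Hk2] := subsetP sKTH _ Kk.
  have sKkK : <[(k1, k2)]> \subset K by rewrite cycle_subG.
  apply: (subsetP sKkK); apply: pairg1_in_cycle => /=.
  by rewrite (coprime_dvdl (order_dvdG Tk1)) ?(coprime_dvdr (order_dvdG Hk2)).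
apply/subsetP => -[t h] /setXP[Tt Hh].
have /morphimP[k _ Kk /= ->] : t \in [morphism of fun x => x.1] @* K by rewrite fstK.
have /morphimP[l _ Kl /= ->] : h \in [morphism of fun x => x.2] @* K by rewrite sndK.
have -> : (k.1, l.2) = (k.1, 1) * ((l.1, 1)^-1 * l).
  case: l {Kl} => l1 l2 /=.
  change ((k.1, l2) = (k.1 * (l1^-1 * l1), 1 * (1^-1 * l2))).
  by rewrite mulVg mulg1 invg1 !mul1g.
by rewrite !groupM ?groupV ?pairg1_K.
Qed.

Lemma pairg1_Phi_coprime f : f \in 'Phi(T) -> (f, 1) \in 'Phi(setX T H).
Proof.
move=> fPhi; have Tf : f \in T := subsetP (Phi_sub T) f fPhi.
apply: mem_Phi_nongen => [|A sATH genAf]; first by rewrite inE Tf group1.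
set pr1 := [morphism of fun x : gT1 * gT2 => x.1].
have proj_gen (p : {morphism setT >-> _}) :
    p @* <<A :|: [set (f, 1)]>> = <<p @* A :|: [set p (f, 1)]>>.
  by rewrite morphim_gen ?subsetT // morphimU morphim_set1 ?inE.
apply: coprime_subdirect_setX; first by rewrite gen_subG.
- rewrite morphim_gen ?subsetT //; apply: (Phi_gen_setU1 fPhi).
    by rewrite -(morphim_fstX T H) morphimS.
  by rewrite -[f]/(pr1 (f, 1)) -proj_gen genAf morphim_fstX.
- rewrite morphim_gen ?subsetT // -(morphim_sndX T H) -genAf proj_gen.
  by rewrite gen_setU1_id ?group1.
Qed.

End CoprimeDirectProduct.

Lemma gen_nimE (gT : finGroupType) (G P : {set gT}) :
  gen_nim G P =
  if <<P>> == G then 0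
  else mex [seq gen_nim G (P :|: [set g]) | g <- enum (G :\: P)].
Proof.
rewrite /gen_nim /=; case: eqP => // _; congr mex; apply/eq_in_map => g.
by rewrite mem_enum => gGP; rewrite (cardsD1 g (G :\: P)) gGP setDDl.
Qed.

Section PairingStrategy.

Variables (gT : finGroupType) (G : {group gT}) (z : gT).
Hypotheses (zPhi : z \in 'Phi(G)) (z_order : #[z] = 2).

Definition paired_position (P : {set gT}) :=
  [/\ P \subset G, {in P, forall p, p * z \in P}
    & forall y, y \in G -> <<P :|: [set y]>> != G].

Lemma paired_reply P x :
    paired_position P -> x \in G :\: P ->
    (forall y, y \in G -> <<P :|: [set x] :|: [set y]>> != G) ->
  x * z \in G :\: (P :|: [set x]) /\
  paired_position (P :|: [set x] :|: [set x * z]).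
Proof.
rewrite /paired_position; case=> sPG zP _ /setDP[Gx Px] noWin.
have Gz : z \in G := subsetP (Phi_sub G) z zPhi.
have zz : z * z = 1 by rewrite -expg2 -z_order expg_order.
have xzz : x * z * z = x by rewrite -mulgA zz mulg1.
have Pxz : x * z \notin P by apply: contra Px => /zP; rewrite xzz.
have xz_x : x * z != x.
  by rewrite -{2}(mulg1 x) (inj_eq (mulgI x)) -order_eq1 z_order.
split; first by rewrite !inE negb_or Pxz xz_x groupM.
split; first by rewrite !subUset sPG !sub1set Gx groupM.
  move=> p; rewrite !inE => /orP[/orP[/zP -> // | /eqP ->] | /eqP ->].
    by rewrite eqxx orbT.
  by rewrite xzz eqxx orbT.
move=> y Gy; apply: contra (noWin y Gy) => /eqP genPxy; apply/eqP.
apply: (gen_setU1_mulPhi zPhi (x := x)).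
- by rewrite !subUset sPG !sub1set Gx Gy.
- by rewrite !inE eqxx orbT.
- by rewrite -genPxy setUAC.
Qed.

Lemma gen_nim_paired P : paired_position P -> gen_nim G P = 0.
Proof.
have [n] := ubnP #|G :\: P|; elim: n P => // n IHn P ltPn posP.
have [sPG _ noWin] := posP.
have nPG : <<P>> != G by have := noWin 1 (group1 G); rewrite gen_setU1_id.
rewrite gen_nimE (negbTE nPG); apply/eqP; rewrite mex_eq0.
apply/mapP => -[x]; rewrite mem_enum => xGP; move/esym/eqP; apply/negP.
set Q := P :|: [set x]; have /setDP[Gx _] := xGP.
rewrite gen_nimE (negbTE (noWin x Gx)) mex_eq0 negbK; apply/mapP.
(* Win at once if some move generates G, otherwise answer x with x * z. *)
have [y /andP[Gy genQy] | noWinQ] :=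
  pickP (fun y => (y \in G) && (<<Q :|: [set y]>> == G)).
- exists y; last by rewrite gen_nimE genQy.
  rewrite mem_enum !inE Gy andbT; apply: contra (noWin x Gx) => Qy.
  by rewrite -(gen_setU1_id (x := y)) // mem_gen // !inE.
have noWinQ' y : y \in G -> <<Q :|: [set y]>> != G.
  by move=> Gy; have /negbT := noWinQ y; rewrite Gy.
have [xzGQ posR] := paired_reply posP xGP noWinQ'.
exists (x * z); first by rewrite mem_enum.
apply/esym/IHn => //; rewrite -ltnS (leq_trans _ ltPn) // ltnS.
apply/proper_card/properP; split; first by rewrite setDS // -setUA subsetUl.
by exists x; rewrite // !inE eqxx !orbT.
Qed.

Theorem GEN_eq0_Phi_involution : ~~ cyclic G -> GEN G = 0.
Proof.
move=> ncycG; apply: gen_nim_paired; split=> [|p|y Gy]; rewrite ?sub0set ?inE //.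
by rewrite set0U; apply: contra ncycG => /eqP <-; apply/cyclicP; exists y.
Qed.

End PairingStrategy.

Lemma dgen_cyclic (gT : finGroupType) (G : {group gT}) : cyclic G -> dgen G <= 1.
Proof.
case/cyclicP => x defG; rewrite /dgen; case: ex_minnP => m _ /(_ 1%N); apply.
by apply/existsP; exists [set x]; rewrite cards1 sub1set defG cycle_id /=.
Qed.

Theorem proposition4p6 (gT1 gT2 : finGroupType) (T : {group gT1}) (H : {group gT2}) :
  2.-group T -> odd #|H| ->
  dgen (setX T H)%G = 2 ->
  'Phi(T) != 1 ->
  GEN (setX T H) = 0.
Proof.
move=> pT oddH dTH ntPhi.
have coTH : coprime #|T| #|H|.
  by apply: pnat_coprime pT _; rewrite p'natE // dvdn2 oddH.
have [_ evenPhi _] := pgroup_pdiv (pgroupS (Phi_sub T) pT) ntPhi.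
have [f Phif ord_f] := Cauchy (isT : prime 2) evenPhi.
apply: (GEN_eq0_Phi_involution (z := (f, 1))).
- exact: pairg1_Phi_coprime.
- by rewrite -[(f, 1)]/(pairg1 gT2 f) order_injm ?injm_pairg1 ?inE.
- by apply/negP => /dgen_cyclic; rewrite dTH.
Qed.
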